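(* Let $\{F_1,F_2,F_3,\ldots,F_m\}$, $m\ge2$, be a collection of $X$-forests (all rooted or all unrooted), and let $F$ be a maximum agreement forest for it. Then there exists a maximal agreement forest $F'$ for $F_1$ and $F_2$ such that $F$ is also a maximum agreement forest for $\{F',F_3,\ldots,F_m\}$.
   Context: $X$-forests: for a finite label set $X$, an unrooted $X$-forest is a subgraph of a tree whose leaves are bijectively labeled by $X$ and whose unlabeled vertices have degree at least 3, each component containing a leaf, component label sets partitioning $X$; a rooted $X$-forest is the same with a distinguished leaf $\rho\in X$ as root of the underlying tree, each component rooted at $\rho$ or at the lowest common ancestor of its labeled leaves. Forests are taken up to forced contraction (unlabeled degree-2 non-root vertices suppressed, unlabeled vertices of degree $<2$ deleted). $\mathrm{Ord}(F)$ is the number of components. $F'$ is a subforest of $F$ if, up to forced contraction, $F'$ is isomorphic (preserving labels and roots) to $F$ with some edges deleted. An agreement forest for a collection is an $X$-forest that is a subforest of each member; a maximum agreement forest is one of minimum order. An agreement forest $F$ for $F_1,F_2$ is a maximal agreement forest if there is no agreement forest $F'$ for $F_1,F_2$ with $F$ a subforest of $F'$ and $\mathrm{Ord}(F')<\mathrm{Ord}(F)$. *)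

(* X-forests as concrete labeled graphs, compared up to
   forced contraction via their "essential" (non-suppressed) vertices. *)
From mathcomp Require Import all_boot.
Set Implicit Arguments. Unset Strict Implicit. Unset Printing Implicit Defensive.

(* A labeled graph: vertex type, underlying tree edges, forest edges
   (a subset of the tree edges), and the labeling of X. *)
Record lgraph (X : finType) := LGraph {
  lV : finType;
  ltr : rel lV;
  lfe : rel lV;
  llab : X -> lV }.
Arguments lV {X} l.
Arguments ltr {X} l _ _.
Arguments lfe {X} l _ _.
Arguments llab {X} l _.

Definition avoid {V : finType} (e : rel V) (v : V) : rel V :=
  fun a b => [&& e a b, a != v & b != v].

(* in an acyclic graph: v lies on the (unique) e-path between u and w *)
Definition between {V : finType} (e : rel V) (u w v : V) : bool :=
  connect e u w && [|| v == u, v == w | ~~ connect (avoid e v) u w].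

Definition deg {V : finType} (e : rel V) (v : V) : nat := #|[set w | e v w]|.

Section Graph.
Variables (X : finType) (r : option X) (G : lgraph X).
(* r = None : unrooted;  r = Some rho : rooted with root label rho *)
Local Notation V := (lV G).
Local Notation tr := (ltr G).
Local Notation fe := (lfe G).
Local Notation lab := (llab G).

(* vertices surviving the deletion part of forced contraction:
   those on a forest path between two labeled leaves *)
Definition kept (v : V) : bool :=
  [exists x, exists y, between fe (lab x) (lab y) v].

(* unlabeled kept vertices of degree >= 3 in the kept forest *)
Definition is_median (v : V) : bool :=
  [exists a, exists b, exists c,
     [&& between fe (lab a) (lab b) v, between fe (lab b) (lab c) v
       & between fe (lab a) (lab c) v]].

(* root of a component (rooted case): the kept vertex that is an ancestor,
   in the underlying tree rooted at rho, of all labels of its component,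
   i.e. rho or the lowest common ancestor of the component's labels *)
Definition is_croot (v : V) : bool :=
  match r with
  | None => false
  | Some rho => kept v &&
      [forall x, connect fe v (lab x) ==> between tr (lab rho) (lab x) v]
  end.

(* vertices of the forced contraction *)
Definition essential (v : V) : bool :=
  kept v && [|| v \in codom lab, is_croot v | is_median v].

(* adjacency in the forced contraction *)
Definition cadj (u w : V) : bool :=
  [&& essential u, essential w, u != w, connect fe u w &
      [forall v, [&& between fe u w v, v != u & v != w] ==> ~~ essential v]].

Definition lord : nat :=
  #|[set [set y | connect fe (lab x) (lab y)] | x : X]|.

Definition is_xforest : Prop :=
  [/\ symmetric tr, irreflexive tr,
      (* the underlying graph is a tree: connected, and every edge a bridge *)
      (forall u v, connect tr u v) &
      (forall u v, tr u v ->
         ~~ connect (fun a b => tr a b &&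
               ~~ (((a == u) && (b == v)) || ((a == v) && (b == u)))) u v)]
  /\ [/\ injective lab,
      (forall v, (deg tr v <= 1) = (v \in codom lab)) &
      (forall v, v \notin codom lab -> 3 <= deg tr v)]
  /\ [/\
      (forall u v, fe u v -> tr u v), symmetric fe &
      (forall u v, fe u v -> exists x, connect fe u (lab x))].

End Graph.
Arguments kept {X} G v.
Arguments is_median {X} G v.
Arguments is_croot {X} r G v.
Arguments essential {X} r G v.
Arguments cadj {X} r G u w.
Arguments lord {X} G.
Arguments is_xforest {X} G.

Definition fc_iso (X : finType) (r : option X) (G1 G2 : lgraph X) : Prop :=
  exists (phi : lV G1 -> lV G2) (psi : lV G2 -> lV G1),
    [/\ (forall v, essential r G1 v -> essential r G2 (phi v) /\ psi (phi v) = v),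
        (forall w, essential r G2 w -> essential r G1 (psi w) /\ phi (psi w) = w),
        (forall x, phi (llab G1 x) = llab G2 x),
        (forall u v, essential r G1 u -> essential r G1 v ->
           cadj r G2 (phi u) (phi v) = cadj r G1 u v) &
        (forall v, essential r G1 v -> is_croot r G2 (phi v) = is_croot r G1 v)].

(* F' is a subforest of F: up to forced contraction, F' is isomorphic to F
   with some edges deleted *)
Definition subforest (X : finType) (r : option X) (F' F : lgraph X) : Prop :=
  exists f' : rel (lV F),
    [/\ (forall u v, f' u v -> lfe F u v), symmetric f' &
        fc_iso r F' (@LGraph X (lV F) (ltr F) f' (llab F))].

Fixpoint all_lg (X : finType) (P : lgraph X -> Prop) (Fs : seq (lgraph X)) : Prop :=
  match Fs with
  | [::] => True
  | G :: Fs' => P G /\ all_lg P Fs'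
  end.

Definition agreement (X : finType) (r : option X) (Fs : seq (lgraph X))
    (F : lgraph X) : Prop :=
  is_xforest F /\ all_lg (subforest r F) Fs.

Definition maximum_af (X : finType) (r : option X) (Fs : seq (lgraph X))
    (F : lgraph X) : Prop :=
  agreement r Fs F /\ forall G, agreement r Fs G -> lord F <= lord G.

Definition maximal_af (X : finType) (r : option X) (F1 F2 F : lgraph X) : Prop :=
  agreement r [:: F1; F2] F /\
  ~ (exists G, [/\ agreement r [:: F1; F2] G, subforest r F G & lord G < lord F]).

From mathcomp Require Import all_boot.
From Stdlib Require Import Classical.
Set Implicit Arguments. Unset Strict Implicit. Unset Printing Implicit Defensive.

(* F is an agreement forest for F1 and F2; among all agreement forests for F1
   and F2 of which F is a subforest, take one, F', of minimum order.  F' is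
   maximal by construction, and F is an agreement forest for F', F3, ..., Fm.
   Conversely any agreement forest for F', F3, ..., Fm is one for the whole
   collection, because the subforest relation is transitive; hence F remains
   maximum.

   Transitivity is the real work, since subforests are only determined up to
   forced contraction.  If A is B with the edges outside f deleted, and B is
   isomorphic to C with the edges outside g deleted, transport f to C: keep an
   edge of C exactly when it lies on a forest path between two labels that are
   f-connected in B.  Paths between essential vertices of a forest are
   determined by its contraction, so the isomorphism B ~ C|g preserves
   connectivity and betweenness, which makes the transported forest isomorphic
   to A. *)

Definition rem_edge {T : eqType} (e : rel T) (u v : T) : rel T :=
  fun a b => e a b && ~~ (((a == u) && (b == v)) || ((a == v) && (b == u))).

Definition acyclic {T : finType} (e : rel T) :=
  forall u v, e u v -> ~~ connect (rem_edge e u v) u v.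

Lemma sub_acyclic (T : finType) (e e' : rel T) :
  subrel e' e -> acyclic e -> acyclic e'.
Proof.
move=> sub ac u v /sub euv; apply/negP => C; move/negP: (ac u v euv); apply.
apply: connect_sub C => a b /andP[/sub eab nab]; apply: connect1; exact/andP.
Qed.

Lemma avoid_sym (T : finType) (e : rel T) v : symmetric e -> symmetric (avoid e v).
Proof.
by move=> es a b; rewrite /avoid es; case: (a != v); case: (b != v); rewrite ?andbF.
Qed.

Lemma rem_edge_sym (T : finType) (e : rel T) u v : symmetric e -> symmetric (rem_edge e u v).
Proof.
move=> es a b; rewrite /rem_edge es.
by case: (a == u); case: (b == v); case: (a == v); case: (b == u).
Qed.

Lemma between_connect (T : finType) (e : rel T) u w v :
  between e u w v -> connect e u w.
Proof. by case/andP. Qed.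

Lemma betweenxx (T : finType) (e : rel T) u v : between e u u v -> v = u.
Proof. by case/andP=> _; rewrite connect0 orbF orbb => /eqP. Qed.

Lemma between_src (T : finType) (e : rel T) u w : connect e u w -> between e u w u.
Proof. by move=> c; rewrite /between c eqxx. Qed.

Lemma between_dst (T : finType) (e : rel T) u w : connect e u w -> between e u w w.
Proof. by move=> c; rewrite /between c eqxx orbT. Qed.

Lemma between_sym (T : finType) (e : rel T) u w v :
  symmetric e -> between e u w v = between e w u v.
Proof.
move=> es; rewrite /between (sym_connect_sym es) (sym_connect_sym (avoid_sym v es)).
by rewrite [(v == u) || _]orbA [(v == u) || _]orbC -orbA.
Qed.

Lemma path_avoid (T : finType) (e : rel T) v x s :
  v \notin x :: s -> path e x s -> path (avoid e v) x s.
Proof.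
elim: s x => [//|a s IH] x; rewrite !inE !negb_or => /and3P[nx na ns].
case/andP=> exa ps; rewrite /= IH ?inE ?negb_or ?na //=.
by rewrite /avoid exa (eq_sym x) (eq_sym a) nx na.
Qed.

Lemma path_avoid_notin (T : finType) (e : rel T) v x s :
  path (avoid e v) x s -> v \notin s.
Proof.
elim: s x => [//|a s IH] x /= /andP[/and3P[_ _ av] ps].
by rewrite inE negb_or eq_sym av (IH a).
Qed.

Lemma path_avoidW (T : finType) (e : rel T) v x s :
  path (avoid e v) x s -> path e x s.
Proof. by apply: sub_path => a b /andP[]. Qed.

Lemma path_rem_edge (T : eqType) (e : rel T) u v x s :
  u \notin x :: s -> path e x s -> path (rem_edge e u v) x s.
Proof.
move=> nu; apply: (@sub_in_path _ (predC1 u)); last first.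
  by apply/allP => y yi /=; apply: contraNneq nu => <-.
move=> a b /= au bu eab; rewrite /rem_edge eab /= negb_or.
by rewrite (negbTE au) (negbTE bu) andbF.
Qed.

Lemma mem_split (T : eqType) (x : T) (s : seq T) :
  x \in s -> exists s1 s2, s = s1 ++ x :: s2.
Proof. by case/splitPr=> s1 s2; exists s1, s2. Qed.

Lemma connect_uniq_path (T : finType) (e : rel T) u w :
  connect e u w -> exists p, [/\ path e u p, uniq (u :: p) & last u p = w].
Proof.
case/connectP=> p pp ->; case: (shortenP pp) => p' pp' up' _.
by exists p'.
Qed.

Lemma connect_subrel (T : finType) (e e' : rel T) u w :
  subrel e' e -> connect e' u w -> connect e u w.
Proof. by move=> sub; apply: connect_sub => a b /sub /connect1. Qed.

Lemma connect_sym_ends (T : finType) (e : rel T) a b u w :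
  symmetric e -> connect e a u -> connect e b w -> connect e u w = connect e a b.
Proof.
move=> es au bw; have cs := sym_connect_sym es.
apply/idP/idP => c.
  apply: connect_trans au _; apply: connect_trans c _; by rewrite cs.
apply: connect_trans bw; apply: connect_trans c; by rewrite cs.
Qed.

Section Tree.
Variables (T : finType) (e : rel T).
Hypotheses (esym : symmetric e) (eac : acyclic e).

Lemma uniq_path_unique p q u :
  path e u p -> uniq (u :: p) -> path e u q -> uniq (u :: q) ->
  last u p = last u q -> p = q.
Proof.
elim: p u q => [|a p IH] u [|b q] //=.
- move=> _ _ _ /andP[nu _] Eu; move: (mem_last b q); rewrite -Eu.
  by move=> ui; move: nu; rewrite ui.
- move=> _ /andP[nu _] _ _ Eu; move: (mem_last a p); rewrite Eu.
  by move=> ui; move: nu; rewrite ui.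
case/andP=> eua pp /andP[nua up] /andP[eub pq] /andP[nub uq] El.
have [ab|ab] := eqVneq a b; first by subst b; rewrite (IH a q pp up pq uq El).
(* two distinct paths from u would close a cycle through the edge u a *)
exfalso; move/negP: (eac eua); apply.
have c1 : connect (rem_edge e u a) a (last a p).
  by apply/connectP; exists p => //; apply: path_rem_edge.
have c2 : connect (rem_edge e u a) b (last b q).
  by apply/connectP; exists q => //; apply: path_rem_edge.
rewrite (sym_connect_sym (rem_edge_sym u a esym)).
apply: (connect_trans c1); rewrite El.
rewrite (sym_connect_sym (rem_edge_sym u a esym)) in c2.
apply: (connect_trans c2); apply: connect1.
rewrite /rem_edge esym eub /= negb_or; apply/andP; split.
  by rewrite negb_and; apply/orP; left; apply: contraNneq nub => ->; rewrite inE eqxx.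
by rewrite eq_sym (negbTE ab).
Qed.

Lemma between_mem_path u w v p :
  between e u w v -> path e u p -> last u p = w -> v \in u :: p.
Proof.
case/andP=> _; case/or3P=> [/eqP->|/eqP->|nc] pp lp; first by rewrite inE eqxx.
  by rewrite -lp mem_last.
apply/negPn/negP => nv; move/negP: nc; apply; apply/connectP; exists p => //.
exact: path_avoid.
Qed.

Lemma mem_path_between u p v :
  path e u p -> uniq (u :: p) -> v \in u :: p -> between e u (last u p) v.
Proof.
move=> pp up vi; rewrite /between; apply/andP; split.
  by apply/connectP; exists p.
have [//|vu] := eqVneq v u; have [//|vw] := eqVneq v (last u p).
apply/negP => /connectP[q pq lq].
move: lq; case: (shortenP pq) => q' pq' uq' _ lq'.
have E : q' = p.
  by apply: (uniq_path_unique (path_avoidW pq') uq' pp up); rewrite -lq'.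
move: (path_avoid_notin pq'); rewrite E; move: vi; rewrite inE (negbTE vu) /= => ->.
by [].
Qed.

Lemma between_connect_l u w v : between e u w v -> connect e u v.
Proof.
move=> b; case: (connect_uniq_path (between_connect b)) => p [pp up lp].
exact: (path_connect pp (between_mem_path b pp lp)).
Qed.

Lemma between_connect_r u w v : between e u w v -> connect e v w.
Proof.
rewrite between_sym // => b; rewrite (sym_connect_sym esym); exact: between_connect_l b.
Qed.

Lemma path_prefix x s s1 y s2 : path e x s -> uniq (x :: s) -> x :: s = s1 ++ y :: s2 ->
  [/\ path e x (behead (rcons s1 y)), uniq (x :: behead (rcons s1 y)),
      last x (behead (rcons s1 y)) = y, x :: behead (rcons s1 y) = rcons s1 y
    & uniq (rcons s1 y ++ s2)].
Proof.
move=> pp up E.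
have U : uniq (rcons s1 y ++ s2) by rewrite cat_rcons -E.
have E2 : x :: behead (rcons s1 y) = rcons s1 y.
  by case: s1 E {U} => [|a s1] /= [->].
rewrite E2; split => //.
- case: s1 E {U E2} => [|a s1] /= [ea es]; first by [].
  subst; move: pp; rewrite cat_path rcons_path => /andP[-> /=].
  by case/andP.
- by move: U; rewrite cat_uniq => /andP[].
- by case: s1 E {U E2} => [|a s1] /= [-> _] //; rewrite last_rcons.
Qed.

Lemma path_suffix x s s1 y s2 : path e x s -> uniq (x :: s) -> x :: s = s1 ++ y :: s2 ->
  [/\ path e y s2, uniq (y :: s2) & last y s2 = last x s].
Proof.
move=> pp up E.
have U : uniq (s1 ++ y :: s2) by rewrite -E.
split.
- case: s1 E {U} => [|a s1] /= [ea es]; first by subst.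
  by subst; move: pp; rewrite cat_path => /andP[_ /=] /andP[].
- by move: U; rewrite cat_uniq => /and3P[].
- by rewrite -[last x s]/(last x (x :: s)) E last_cat.
Qed.

Lemma between_trans u w v t : between e u w v -> between e u v t -> between e u w t.
Proof.
move=> b1 b2; case: (connect_uniq_path (between_connect b1)) => p [pp up lp].
move: (between_mem_path b1 pp lp); rewrite inE; case/orP => [/eqP vu|vi].
  by subst v; rewrite (betweenxx b2) between_src // (between_connect b1).
case/splitPr: vi pp up lp => p1 p2 pp up lp.
have [P1 U1 L1 E1 _] := path_prefix pp up (erefl ((u :: p1) ++ v :: p2)).
have ti := between_mem_path b2 P1 L1.
rewrite -lp; apply: mem_path_between => //; move: ti; rewrite E1 mem_rcons.
by rewrite !inE mem_cat !inE => /or3P[->|->|->]; rewrite ?orbT.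
Qed.

Lemma between_antisym u w v : between e u w v -> between e u v w -> v = w.
Proof.
move=> b1 b2; case: (connect_uniq_path (between_connect b1)) => p [pp up lp].
move: (between_mem_path b1 pp lp); rewrite inE; case/orP => [/eqP vu|vi].
  by subst v; rewrite (betweenxx b2).
case/splitPr: vi pp up lp => p1 p2 pp up lp.
have [P1 U1 L1 E1 U2] := path_prefix pp up (erefl ((u :: p1) ++ v :: p2)).
have wi := between_mem_path b2 P1 L1.
move: lp; rewrite last_cat /=; case: p2 pp up U2 => [|a p2] pp up U2 /= lp //.
have : w \in a :: p2 by rewrite -lp mem_last.
move: U2; rewrite cat_uniq => /and3P[_ /hasPn H _] /H; rewrite -E1 wi.
by [].
Qed.

Lemma between_shift a c m p : between e a c m -> between e a m p -> between e p c m.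
Proof.
move=> b1 b2; case: (connect_uniq_path (between_connect b1)) => P [pP uP lP].
move: (between_mem_path b1 pP lP); rewrite inE; case/orP => [/eqP ma|mi].
  subst m; rewrite (betweenxx b2); exact: between_src (between_connect b1).
case/splitPr: mi pP uP lP => P1 P2 pP uP lP.
have EP : a :: P1 ++ m :: P2 = (a :: P1) ++ m :: P2 by [].
have [Q1 _ L1 E1 _] := path_prefix pP uP EP.
move: (between_mem_path b2 Q1 L1); rewrite E1 mem_rcons in_cons.
case/orP => [/eqP pm|pi].
  subst p; rewrite between_src //; rewrite -lP; apply/connectP.
  by have [S1 _ S3] := path_suffix pP uP EP; exists P2.
case/splitPr: pi EP => R1 R2 EP.
have E3 : a :: P1 ++ m :: P2 = R1 ++ p :: (R2 ++ m :: P2) by rewrite EP -catA.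
have [S1 S2 S3] := path_suffix pP uP E3.
rewrite -lP -S3; apply: mem_path_between => //.
by rewrite inE mem_cat inE eqxx !orbT.
Qed.

Lemma between_cover x y v z :
  between e x y v -> connect e x z -> between e x z v \/ between e z y v.
Proof.
move=> b cxz; have cxy := between_connect b.
have czy : connect e z y.
  by apply: connect_trans cxy; rewrite (sym_connect_sym esym).
case: (connect_uniq_path cxz) => q [pq uq lq].
case: (connect_uniq_path czy) => s [ps us ls].
have pqs : path e x (q ++ s) by rewrite cat_path pq lq.
have Lq : last x (q ++ s) = y by rewrite last_cat lq ls.
move: Lq; case: (shortenP pqs) => p' pp' up' sub Lp'.
move: (between_mem_path b pp' Lp').
rewrite inE; case/orP => [/eqP ->|vi]; first by left; apply: between_src.
move: (sub _ vi); rewrite mem_cat; case/orP => vi'.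
  by left; rewrite -lq; apply: mem_path_between; rewrite // inE vi' orbT.
by right; rewrite -ls; apply: mem_path_between; rewrite // inE vi' orbT.
Qed.

(* The median is the first vertex of the path from z to x that lies on the
   path from x to y. *)
Lemma median_exists x y z : connect e x y -> connect e x z ->
  exists m, [/\ between e x y m, between e y z m & between e x z m].
Proof.
move=> cxy cxz; case: (connect_uniq_path cxy) => P [pP uP lP].
have czx : connect e z x by rewrite (sym_connect_sym esym).
case: (connect_uniq_path czx) => S [pS uS lS].
set t := z :: S.
have ht : has (mem (x :: P)) t.
  by apply/hasP; exists x; [rewrite /t -{1}lS mem_last | exact: mem_head].
set i := find (mem (x :: P)) t.
have isz : i < size t by rewrite -has_find.
set m := nth x t i.
have mP : m \in x :: P by exact: (nth_find x ht).
have EE : z :: S = take i t ++ m :: drop i.+1 t by rewrite -drop_nth // cat_take_drop.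
have [Q1 U1 L1 E1 U2] := path_prefix pS uS EE.
have nT1 : ~~ has (mem (x :: P)) (take i t) by rewrite has_take // ltnn.
have [R1 [R2 ER]] := mem_split mP.
have [S1 S2 S3] := path_suffix pP uP ER.
set W := behead (rcons (take i t) m) ++ R2.
have pW : path e z W by rewrite /W cat_path Q1 L1.
have EW : z :: W = take i t ++ m :: R2 by rewrite /W -cat_cons E1 cat_rcons.
have uW : uniq (z :: W).
  rewrite EW cat_uniq S2 andbT.
  move: U2; rewrite cat_uniq rcons_uniq => /andP[/andP[mT1 ->] _] /=.
  rewrite negb_or mT1 /=; apply/hasPn => w wR2; apply/negP => wT1.
  by move/hasPn: nT1 => /(_ w wT1); rewrite /= ER mem_cat inE wR2 !orbT.
exists m; split.
- by rewrite -lP; apply: mem_path_between.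
- rewrite between_sym // -lP -S3.
  have -> : last m R2 = last z W by rewrite /W last_cat L1.
  by apply: mem_path_between; rewrite // EW mem_cat inE eqxx orbT.
- by rewrite between_sym // -lS; apply: mem_path_between => //; exact: mem_nth.
Qed.

End Tree.

Section SubTree.
Variables (T : finType) (e e' : rel T).
Hypotheses (esym : symmetric e) (eac : acyclic e) (e'sym : symmetric e')
  (sub : subrel e' e).

Lemma between_subrel u w v : connect e' u w -> between e' u w v = between e u w v.
Proof.
have eac' : acyclic e' := sub_acyclic sub eac.
move=> c; case: (connect_uniq_path c) => p [pp up lp].
have pp2 : path e u p by apply: sub_path pp => a b /sub.
by apply/idP/idP => b; rewrite -lp; apply: mem_path_between => //;
  [exact: (between_mem_path b pp lp) | exact: (between_mem_path b pp2 lp)].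
Qed.

Lemma between_subrelE u w v : between e' u w v = connect e' u w && between e u w v.
Proof.
by case c: (connect e' u w); [rewrite between_subrel | rewrite /between c].
Qed.

End SubTree.

Section IsoPath.
Variables (V1 V2 : finType) (e1 : rel V1) (e2 : rel V2) (E1 : pred V1)
  (phi : V1 -> V2).
Hypotheses (e1E : forall a b, e1 a b -> E1 a /\ E1 b)
  (phi_rel : forall a b, E1 a -> E1 b -> e2 (phi a) (phi b) = e1 a b).

Lemma iso_path a p : E1 a -> path e1 a p -> path e2 (phi a) (map phi p).
Proof.
elim: p a => [//|c p IH] a Ea /= /andP[eac pp].
have [_ Ec] := e1E eac.
by rewrite phi_rel // eac /= IH.
Qed.

Lemma iso_connect a b : E1 a -> connect e1 a b -> connect e2 (phi a) (phi b).
Proof.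
move=> Ea /connectP[p pp ->]; apply/connectP; exists (map phi p).
  exact: iso_path.
by rewrite last_map.
Qed.

End IsoPath.

Section IsoBetween.
Variables (V1 V2 : finType) (e1 : rel V1) (e2 : rel V2) (E1 : pred V1) (E2 : pred V2)
  (phi : V1 -> V2) (psi : V2 -> V1).
Hypotheses (e1E : forall a b, e1 a b -> E1 a /\ E1 b)
  (e2E : forall a b, e2 a b -> E2 a /\ E2 b)
  (phiK : forall a, E1 a -> E2 (phi a) /\ psi (phi a) = a)
  (psiK : forall b, E2 b -> E1 (psi b) /\ phi (psi b) = b)
  (phi_rel : forall a b, E1 a -> E1 b -> e2 (phi a) (phi b) = e1 a b).

Lemma psi_rel a b : E2 a -> E2 b -> e1 (psi a) (psi b) = e2 a b.
Proof.
move=> Ea Eb; have [E1a <-] := psiK Ea; have [E1b <-] := psiK Eb.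
by rewrite phi_rel // (psiK Ea).2 (psiK Eb).2.
Qed.

Lemma iso_connectE a b : E1 a -> E1 b -> connect e2 (phi a) (phi b) = connect e1 a b.
Proof.
move=> Ea Eb; apply/idP/idP; last first.
  exact: (iso_connect e1E phi_rel Ea).
move/(iso_connect e2E psi_rel (phiK Ea).1).
by rewrite (phiK Ea).2 (phiK Eb).2.
Qed.

Lemma iso_eqE a b : E1 a -> E1 b -> (phi a == phi b) = (a == b).
Proof.
move=> Ea Eb; apply/eqP/eqP => [E|->//].
by rewrite -(phiK Ea).2 -(phiK Eb).2 E.
Qed.

End IsoBetween.

Lemma iso_betweenE (V1 V2 : finType) (e1 : rel V1) (e2 : rel V2) (E1 : pred V1)
    (E2 : pred V2) (phi : V1 -> V2) (psi : V2 -> V1) :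
  (forall a b, e1 a b -> E1 a /\ E1 b) ->
  (forall a b, e2 a b -> E2 a /\ E2 b) ->
  (forall a, E1 a -> E2 (phi a) /\ psi (phi a) = a) ->
  (forall b, E2 b -> E1 (psi b) /\ phi (psi b) = b) ->
  (forall a b, E1 a -> E1 b -> e2 (phi a) (phi b) = e1 a b) ->
  forall u w v, E1 u -> E1 w -> E1 v ->
  between e2 (phi u) (phi w) (phi v) = between e1 u w v.
Proof.
move=> e1E e2E phiK psiK phi_rel u w v Eu Ew Ev.
rewrite /between (iso_connectE e1E e2E phiK psiK phi_rel) // !(iso_eqE phiK) //.
congr (_ && [|| _, _ | ~~ _]).
apply: (@iso_connectE _ _ (avoid e1 v) (avoid e2 (phi v)) E1 E2 phi psi) => //.
- by move=> a b /and3P[/e1E].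
- by move=> a b /and3P[/e2E].
- by move=> a b Ea Eb; rewrite /avoid phi_rel // !(iso_eqE phiK).
Qed.

Definition wf_lgraph (X : finType) (L : lgraph X) :=
  [/\ symmetric (ltr L), acyclic (ltr L), subrel (lfe L) (ltr L) & symmetric (lfe L)].

Lemma xforest_wf (X : finType) (G : lgraph X) : is_xforest G -> wf_lgraph G.
Proof. by case=> [[s _ _ a] [_ [sub fs _]]]; split. Qed.

Definition restr (X : finType) (G : lgraph X) (f : rel (lV G)) : lgraph X :=
  @LGraph X (lV G) (ltr G) f (llab G).
Arguments restr {X} G f.

Lemma wf_restr (X : finType) (G : lgraph X) (f : rel (lV G)) :
  wf_lgraph G -> subrel f (lfe G) -> symmetric f -> wf_lgraph (restr G f).
Proof. by case=> s a sub _ fsub fs; split => // u v /fsub /sub. Qed.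

Section Contraction.
Variables (X : finType) (r : option X) (L : lgraph X).
Hypothesis wfL : wf_lgraph L.
Local Notation fe := (lfe L).
Local Notation ess := (essential r L).
Local Notation cad := (cadj r L).

Lemma lfe_sym : symmetric fe. Proof. by case: wfL. Qed.
Lemma lfe_acyclic : acyclic fe.
Proof. by case: wfL => _ ac sub _; exact: sub_acyclic sub ac. Qed.

Lemma cadj_essential p q : cad p q -> ess p /\ ess q.
Proof. by case/and5P. Qed.

Lemma cadj_connect p q : cad p q -> connect fe p q.
Proof. by case/and5P. Qed.

Lemma cadj_connect_avoid p q v :
  cad p q -> ess v -> v != p -> v != q -> connect (avoid fe v) p q.
Proof.
case/and5P=> _ _ _ c /forallP /(_ v) H ev vp vq.
move: H; rewrite vp vq ev /= andbT implybF /between c /= (negbTE vp) (negbTE vq) /=.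
by rewrite negbK.
Qed.

Lemma between_trans_l u w t s :
  between fe u w t -> between fe u t s -> between fe u w s.
Proof. exact: (between_trans lfe_sym lfe_acyclic). Qed.

Lemma between_trans_r u w t s :
  between fe u w t -> between fe t w s -> between fe u w s.
Proof.
move=> b b2; rewrite between_sym; last exact: lfe_sym.
rewrite between_sym in b; last exact: lfe_sym.
rewrite between_sym in b2; last exact: lfe_sym.
exact: between_trans_l b b2.
Qed.

Lemma essential_lab x : ess (llab L x).
Proof.
rewrite /essential /kept; apply/andP; split.
  by apply/existsP; exists x; apply/existsP; exists x; rewrite /between connect0 eqxx.
by rewrite codom_f.
Qed.

(* Induction on the number of vertices between u and w, splitting at an inner
   essential vertex when there is one. *)
Lemma connect_cadj_within u w : ess u -> ess w -> connect fe u w ->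
  connect [rel p q | cad p q && between fe u w p && between fe u w q] u w.
Proof.
have fs := lfe_sym; have fa := lfe_acyclic.
move: {2}#|_| (leqnn #|[pred t | between fe u w t]|) => n.
elim: n u w => [|n IH] u w.
  move=> H _ _ c; move: H; rewrite leqn0 => /eqP/card0_eq/(_ u).
  by rewrite inE (between_src c).
move=> H eu ew c.
have [->|uw] := eqVneq u w; first exact: connect0.
case: (pickP [pred t | [&& ess t, between fe u w t, t != u & t != w]]) => [t|none].
  case/and4P=> et b tu tw.
  have lt1 : #|[pred s | between fe u t s]| < #|[pred s | between fe u w s]|.
    apply: proper_card; apply/properP; split.
      by apply/subsetP => s; rewrite !inE; exact: between_trans_l.
    exists w; first by rewrite inE; exact: between_dst.
    rewrite inE; apply/negP => b2; move/eqP: tw; apply; exact: (between_antisym b b2).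
  have lt2 : #|[pred s | between fe t w s]| < #|[pred s | between fe u w s]|.
    apply: proper_card; apply/properP; split.
      by apply/subsetP => s; rewrite !inE; exact: between_trans_r.
    exists u; first by rewrite inE; exact: between_src.
    rewrite inE; apply/negP => b2; move/eqP: tu; apply.
    rewrite between_sym // in b; rewrite between_sym // in b2.
    exact: (between_antisym b b2).
  have C1 := IH u t (leq_trans lt1 H) eu et (between_connect_l b).
  have C2 := IH t w (leq_trans lt2 H) et ew (between_connect_r fs b).
  apply: connect_trans (_ : connect _ t w).
    apply: connect_sub C1 => p q /= /andP[/andP[cpq bp] bq]; apply: connect1.
    by rewrite /= cpq (between_trans_l b bp) (between_trans_l b bq).
  apply: connect_sub C2 => p q /= /andP[/andP[cpq bp] bq]; apply: connect1.
  by rewrite /= cpq (between_trans_r b bp) (between_trans_r b bq).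
apply: connect1; rewrite /= (between_src c) (between_dst c) !andbT.
apply/and5P; split => //; apply/forallP => v; apply/implyP => /and3P[b vu vw].
by apply/negP => ev; move: (none v); rewrite /= ev b vu vw.
Qed.

Lemma connect_cadjE u w : ess u -> ess w -> connect cad u w = connect fe u w.
Proof.
move=> eu ew; apply/idP/idP; first by apply: connect_sub => p q /cadj_connect.
move/(connect_cadj_within eu ew); apply: connect_sub => p q /andP[/andP[c _] _].
exact: connect1.
Qed.

Lemma between_cadjE u w v : ess u -> ess w -> ess v ->
  between cad u w v = between fe u w v.
Proof.
move=> eu ew ev; rewrite /between connect_cadjE //.
case c: (connect fe u w) => //=.
have [//|vu] := eqVneq v u; have [//|vw] := eqVneq v w; rewrite /=.
congr negb; apply/idP/idP.
  apply: connect_sub => p q /and3P[cpq pv qv].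
  by apply: cadj_connect_avoid; rewrite // eq_sym.
move=> ca; have nb : ~~ between fe u w v by rewrite /between c (negbTE vu) (negbTE vw) ca.
move: (connect_cadj_within eu ew c); apply: connect_sub => p q /andP[/andP[cpq bp] bq].
apply: connect1; rewrite /avoid cpq /=.
by apply/andP; split; apply: contraNneq nb => <-.
Qed.

End Contraction.

Section Forest.
Variables (X : finType) (r : option X) (L : lgraph X).
Hypothesis wfL : wf_lgraph L.
Local Notation fe := (lfe L).
Local Notation tr := (ltr L).
Local Notation lab := (llab L).
Local Notation ess := (essential r L).

Let trs : symmetric tr. Proof. by case: wfL. Qed.
Let tra : acyclic tr. Proof. by case: wfL. Qed.
Let fes : symmetric fe := lfe_sym wfL.
Let fea : acyclic fe := lfe_acyclic wfL.
Let fe_tr : subrel fe tr. Proof. by case: wfL. Qed.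

Lemma median_essential a b c m :
  [&& between fe (lab a) (lab b) m, between fe (lab b) (lab c) m
    & between fe (lab a) (lab c) m] -> ess m.
Proof.
move=> mabc; apply/andP; split.
  by apply/existsP; exists a; apply/existsP; exists b; case/and3P: mabc.
apply/orP; right; apply/orP; right.
by apply/existsP; exists a; apply/existsP; exists b; apply/existsP; exists c.
Qed.

Lemma between_lab_meet a b c d p :
  between fe (lab a) (lab b) p -> between fe (lab c) (lab d) p ->
  exists m, [/\ ess m, between fe (lab a) (lab b) m & between fe (lab c) (lab d) m].
Proof.
move=> b1 b2; have cab := between_connect b1.
have cac : connect fe (lab a) (lab c).
  apply: connect_trans (between_connect_l b1) _.
  by rewrite (sym_connect_sym fes); exact: between_connect_l b2.
have [m [m1 m2 m3]] := median_exists fes fea cab cac.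
exists m; split => //; first by apply: (@median_essential a b c); rewrite m1 m2 m3.
have pcm : between fe p (lab c) m.
  case: (between_cover fes fea b1 (between_connect_l m1)) => bb.
    exact: (between_shift fes fea m3 bb).
  by rewrite between_sym // in bb; exact: (between_shift fes fea m2 bb).
by rewrite between_sym // in pcm; exact: (between_trans fes fea b2 pcm).
Qed.

Section Restriction.
Variable f : rel (lV L).
Hypotheses (f_fe : subrel f fe) (fsym : symmetric f).

Lemma between_restr u w v : between f u w v = connect f u w && between fe u w v.
Proof. exact: (between_subrelE fes fea fsym f_fe). Qed.

Lemma kept_restr v : kept (restr L f) v -> kept L v.
Proof.
case/existsP=> x /existsP[y]; rewrite /= between_restr => /andP[_ b].
by apply/existsP; exists x; apply/existsP; exists y.
Qed.

Lemma median_restr v : is_median (restr L f) v -> is_median L v.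
Proof.
case/existsP=> a /existsP[b /existsP[c]]; rewrite /= !between_restr.
case/and3P=> /andP[_ b1] /andP[_ b2] /andP[_ b3].
by apply/existsP; exists a; apply/existsP; exists b; apply/existsP; exists c; apply/and3P.
Qed.

(* If v becomes a root only after deleting edges, some label z of its old
   component does not descend from v, and v is the median of z and two labels
   whose remaining path passes through v. *)
Lemma croot_restr v :
  is_croot r (restr L f) v -> is_croot r L v || is_median L v.
Proof.
move=> cr; case Cr: (is_croot r L v) => //=; move: cr Cr.
rewrite /is_croot; case: r => [rho|//].
case/andP=> k /forallP cr; rewrite (kept_restr k) /=.
move/negbT; rewrite negb_forall => /existsP[z]; rewrite negb_imply => /andP[cvz nb].
move: k => /existsP[x /existsP[y]]; rewrite /= between_restr => /andP[cxy bxy].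
have bxy' : between f (lab x) (lab y) v by rewrite between_restr cxy.
have cvx : connect f v (lab x).
  by rewrite (sym_connect_sym fsym); exact: between_connect_l bxy'.
have cvy : connect f v (lab y) := between_connect_r fsym bxy'.
have bx := implyP (cr x) cvx; have by_ := implyP (cr y) cvy.
have cxz : connect fe (lab x) (lab z).
  apply: connect_trans cvz; rewrite (sym_connect_sym fes).
  exact: connect_subrel f_fe cvx.
have cyz : connect fe (lab y) (lab z).
  apply: connect_trans cvz; rewrite (sym_connect_sym fes).
  exact: connect_subrel f_fe cvy.
have crz : connect tr (lab rho) (lab z).
  exact: connect_trans (between_connect by_) (connect_subrel fe_tr cyz).
apply/existsP; exists x; apply/existsP; exists y; apply/existsP; exists z.
rewrite bxy /= (between_subrel trs tra fes fe_tr _ cyz) (between_subrel trs tra fes fe_tr _ cxz).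
apply/andP; split.
  case: (between_cover trs tra by_ crz) => bb; first by rewrite bb in nb.
  by rewrite between_sym.
case: (between_cover trs tra bx crz) => bb; first by rewrite bb in nb.
by rewrite between_sym.
Qed.

Lemma essential_restr v : essential r (restr L f) v -> ess v.
Proof.
case/andP=> k; rewrite /essential (kept_restr k) /=.
case/or3P=> [->//|/croot_restr/orP[->|->]|/median_restr ->]; by rewrite ?orbT.
Qed.

End Restriction.

Lemma kept_between_lab c y m : kept L c -> between fe c (lab y) m -> kept L m.
Proof.
move=> /existsP[a /existsP[b bc]] bcm.
have cay : connect fe (lab a) (lab y).
  exact: connect_trans (between_connect_l bc) (between_connect bcm).
rewrite between_sym // in bcm.
case: (between_cover fes fea bc cay) => bb.
  rewrite between_sym // in bb.
  have := between_trans fes fea bb bcm; rewrite between_sym // => h.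
  by apply/existsP; exists a; apply/existsP; exists y.
have := between_trans fes fea bb bcm => h.
by apply/existsP; exists y; apply/existsP; exists b.
Qed.

Lemma croot_betweenE rho c v x :
  is_croot (Some rho) L c -> kept L v -> connect fe v (lab x) -> connect fe c (lab x) ->
  between tr (lab rho) (lab x) v = between fe c (lab x) v.
Proof.
move=> /andP[kc /forallP cr] kv cvx ccx.
have bc := implyP (cr x) ccx.
apply/idP/idP => b; last first.
  rewrite (between_subrel trs tra fes fe_tr _ ccx) in b.
  rewrite between_sym // in bc; rewrite between_sym //; rewrite between_sym // in b.
  exact: (between_trans trs tra bc b).
have crc : connect tr (lab rho) c := between_connect_l bc.
case: (between_cover trs tra b crc) => bb; last first.
  by rewrite (between_subrel trs tra fes fe_tr _ ccx).
(* v lies above c, but also on a forest path between two labels below c: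
   this forces v = c *)
move: kv => /existsP[y /existsP[z bv]].
have cvy : connect fe v (lab y).
  by rewrite (sym_connect_sym fes); exact: between_connect_l bv.
have cvz : connect fe v (lab z) := between_connect_r fes bv.
have ccv : connect fe c v.
  by apply: connect_trans ccx _; rewrite (sym_connect_sym fes).
have byc := implyP (cr y) (connect_trans ccv cvy).
have bzc := implyP (cr z) (connect_trans ccv cvz).
have b1 : between tr v (lab y) c := between_shift trs tra byc bb.
have b2 : between tr v (lab z) c := between_shift trs tra bzc bb.
have cyz : connect fe (lab y) (lab z) := between_connect bv.
rewrite (between_subrel trs tra fes fe_tr _ cyz) in bv.
rewrite between_sym // in b1.
have b3 : between tr c (lab z) v := between_shift trs tra bv b1.
rewrite between_sym // in b2; rewrite between_sym // in b3.
by rewrite -(between_antisym b2 b3); exact: between_src.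
Qed.

(* The root of the component of x is its kept vertex closest to rho. *)
Lemma exists_croot rho x : (forall u v, connect tr u v) ->
  exists c, is_croot (Some rho) L c /\ connect fe c (lab x).
Proof.
move=> trc.
pose P := [pred v | kept L v && connect fe v (lab x)].
have P0 : P (lab x).
  rewrite /= connect0 andbT; apply/existsP; exists x; apply/existsP; exists x.
  by rewrite /between connect0 eqxx.
pose depth v := #|[pred t | between tr (lab rho) v t]|.
case: (arg_minnP depth P0) => c /andP[kc ccx] minc.
exists c; split => //; rewrite /is_croot kc /=.
apply/forallP => y; apply/implyP => ccy; apply/negPn/negP => nb.
have [m [m1 m2 m3]] := median_exists trs tra (trc (lab rho) c) (trc (lab rho) (lab y)).
have mc : m != c by apply: contraNneq nb => <-.
have bfm : between fe c (lab y) m by rewrite (between_subrel trs tra fes fe_tr _ ccy).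
have Pm : P m.
  rewrite /= (kept_between_lab kc bfm) /=.
  apply: connect_trans ccx; rewrite (sym_connect_sym fes).
  exact: between_connect_l bfm.
have := minc m Pm; rewrite /depth leqNgt => /negP; apply.
apply: proper_card; apply/properP; split.
  by apply/subsetP => s; rewrite !inE => bs; exact: (between_trans trs tra m1 bs).
exists c; rewrite !inE; first exact: between_dst.
apply/negP => bb; move/eqP: mc; apply; exact: (esym (between_antisym bb m1)).
Qed.

End Forest.

Section Transport.
Variables (X : finType) (r : option X) (L1 L2 : lgraph X).
Hypotheses (wf1 : wf_lgraph L1) (wf2 : wf_lgraph L2)
  (tr1_connected : forall u v, connect (ltr L1) u v).
Variables (phi : lV L1 -> lV L2) (psi : lV L2 -> lV L1).
Local Notation fe1 := (lfe L1).
Local Notation fe2 := (lfe L2).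
Local Notation lab1 := (llab L1).
Local Notation lab2 := (llab L2).
Local Notation E1 := (essential r L1).
Local Notation E2 := (essential r L2).
Hypotheses
  (phiK : forall v, E1 v -> E2 (phi v) /\ psi (phi v) = v)
  (psiK : forall w, E2 w -> E1 (psi w) /\ phi (psi w) = w)
  (phi_lab : forall x, phi (lab1 x) = lab2 x)
  (phi_cadj : forall u v, E1 u -> E1 v -> cadj r L2 (phi u) (phi v) = cadj r L1 u v)
  (phi_croot : forall v, E1 v -> is_croot r L2 (phi v) = is_croot r L1 v).

Lemma iso_eq u v : E1 u -> E1 v -> (phi u == phi v) = (u == v).
Proof. exact: (iso_eqE phiK). Qed.

Lemma iso_between u w v : E1 u -> E1 w -> E1 v ->
  between fe2 (phi u) (phi w) (phi v) = between fe1 u w v.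
Proof.
move=> eu ew ev.
rewrite -(between_cadjE (r:=r) wf1) // -(between_cadjE (r:=r) wf2) ?(phiK _).1 //.
apply: (iso_betweenE (E1 := E1) (E2 := E2) (psi := psi)) => //.
- by move=> a b /cadj_essential.
- by move=> a b /cadj_essential.
Qed.

Lemma iso_connect_lfe u w : E1 u -> E1 w ->
  connect fe2 (phi u) (phi w) = connect fe1 u w.
Proof.
move=> eu ew.
rewrite -(connect_cadjE (r:=r) wf1) // -(connect_cadjE (r:=r) wf2) ?(phiK _).1 //.
apply: (iso_connectE (E1 := E1) (E2 := E2) (psi := psi)) => //.
- by move=> a b /cadj_essential.
- by move=> a b /cadj_essential.
Qed.

Lemma iso_between_lab x y v : E1 v ->
  between fe2 (lab2 x) (lab2 y) (phi v) = between fe1 (lab1 x) (lab1 y) v.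
Proof. by move=> ev; rewrite -!phi_lab iso_between // essential_lab. Qed.

Lemma iso_connect_lab x y : connect fe2 (lab2 x) (lab2 y) = connect fe1 (lab1 x) (lab1 y).
Proof. by rewrite -!phi_lab iso_connect_lfe // essential_lab. Qed.

Lemma iso_codom_lab v : E1 v -> (phi v \in codom lab2) = (v \in codom lab1).
Proof.
move=> ev; apply/codomP/codomP => [[x ex]|[x ex]]; exists x.
  by rewrite -(phiK ev).2 ex -phi_lab (phiK (essential_lab r L1 x)).2.
by rewrite ex phi_lab.
Qed.

Lemma iso_between_ltr rho v z : r = Some rho -> E1 v -> connect fe1 v (lab1 z) ->
  between (ltr L2) (lab2 rho) (lab2 z) (phi v) = between (ltr L1) (lab1 rho) (lab1 z) v.
Proof.
move=> Er ev cvz.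
have [c [cr ccz]] := exists_croot wf1 rho z tr1_connected.
have cr' : is_croot r L1 c by rewrite Er.
have ec : E1 c.
  by rewrite /essential cr' orbT andbT; move: cr; rewrite /is_croot => /andP[].
have cr2 : is_croot (Some rho) L2 (phi c) by rewrite -Er phi_croot.
have kv2 : kept L2 (phi v) by case/andP: (phiK ev).1.
have cvz2 : connect fe2 (phi v) (lab2 z).
  by rewrite -phi_lab iso_connect_lfe // essential_lab.
have ccz2 : connect fe2 (phi c) (lab2 z).
  by rewrite -phi_lab iso_connect_lfe // essential_lab.
have kv1 : kept L1 v by case/andP: ev.
rewrite (croot_betweenE wf2 cr2 kv2 cvz2 ccz2) (croot_betweenE wf1 cr kv1 cvz ccz).
by rewrite -phi_lab iso_between // essential_lab.
Qed.

Variable f : rel (lV L1).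
Hypotheses (f_fe : subrel f fe1) (fsym : symmetric f).

Definition transport : rel (lV L2) := fun p q => fe2 p q && [exists x, exists y,
  [&& connect f (lab1 x) (lab1 y), between fe2 (lab2 x) (lab2 y) p
    & between fe2 (lab2 x) (lab2 y) q]].

Lemma transport_sub : subrel transport fe2. Proof. by move=> u v /andP[]. Qed.

Lemma transport_sym : symmetric transport.
Proof.
move=> p q; rewrite /transport (lfe_sym wf2); congr (_ && _).
by apply: eq_existsb => x; apply: eq_existsb => y; rewrite [X in _ && X]andbC.
Qed.

Local Notation M1 := (restr L1 f).
Local Notation M2 := (restr L2 transport).

(* A transport edge stays on forest paths between labels of one f-component,
   because two such paths that share a vertex share an essential one, which
   phi maps back into L1. *)
Lemma transport_step x p q :
  (exists y z, [/\ connect f (lab1 x) (lab1 y), connect f (lab1 y) (lab1 z)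
     & between fe2 (lab2 y) (lab2 z) p]) -> transport p q ->
  exists y z, [/\ connect f (lab1 x) (lab1 y), connect f (lab1 y) (lab1 z)
     & between fe2 (lab2 y) (lab2 z) q].
Proof.
move=> [y1 [z1 [xy1 yz1 b1]]] /andP[_ /existsP[y2 /existsP[z2 /and3P[yz2 b2 b3]]]].
exists y2, z2; split => //.
have [m [em m1 m2]] := between_lab_meet r wf2 b1 b2.
have [ep Em] := psiK em.
rewrite -Em iso_between_lab // in m1; rewrite -Em iso_between_lab // in m2.
have c1 : connect f (lab1 y1) (psi m).
  by apply: (@between_connect_l _ _ _ (lab1 z1)); rewrite (between_restr wf1 f_fe fsym) m1 yz1.
have c2 : connect f (lab1 y2) (psi m).
  by apply: (@between_connect_l _ _ _ (lab1 z2)); rewrite (between_restr wf1 f_fe fsym) m2 yz2.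
apply: connect_trans xy1 _; apply: connect_trans c1 _.
by rewrite (sym_connect_sym fsym).
Qed.

Lemma transport_path x s p : path transport s p ->
  (exists y z, [/\ connect f (lab1 x) (lab1 y), connect f (lab1 y) (lab1 z)
     & between fe2 (lab2 y) (lab2 z) s]) ->
  exists y z, [/\ connect f (lab1 x) (lab1 y), connect f (lab1 y) (lab1 z)
     & between fe2 (lab2 y) (lab2 z) (last s p)].
Proof.
elim: p s => [|q p IH] s //= /andP[tsq pp] I; apply: IH pp _; exact: transport_step I tsq.
Qed.

Lemma connect_transport_lab x y :
  connect transport (lab2 x) (lab2 y) = connect f (lab1 x) (lab1 y).
Proof.
apply/idP/idP => [/connectP[p pp Ey]|fxy].
  have [|y1 [z1 [xy1 yz1]]] := transport_path (x := x) pp.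
    by exists x, x; split; rewrite ?connect0 // /between connect0 eqxx.
  rewrite -Ey -(phi_lab y) iso_between_lab ?essential_lab // => b.
  apply: connect_trans xy1 _; apply: (@between_connect_l _ _ _ (lab1 z1)).
  by rewrite (between_restr wf1 f_fe fsym) b yz1.
have c1 : connect fe2 (lab2 x) (lab2 y).
  by rewrite iso_connect_lab; exact: connect_subrel f_fe fxy.
have [p [pp up lp]] := connect_uniq_path c1.
apply/connectP; exists p => //.
have onp : all [pred s | between fe2 (lab2 x) (lab2 y) s] (lab2 x :: p).
  apply/allP => s si; rewrite inE -lp.
  exact: (mem_path_between (lfe_sym wf2) (lfe_acyclic wf2) pp up si).
move: onp pp; apply: sub_in_path => a b; rewrite !inE => ba bb fab.
by rewrite /transport fab /=; apply/existsP; exists x; apply/existsP; exists y; rewrite fxy ba bb.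
Qed.

Lemma between_transport_lab x y v : E1 v ->
  between transport (lab2 x) (lab2 y) (phi v) = between f (lab1 x) (lab1 y) v.
Proof.
move=> ev; rewrite (between_restr wf2 transport_sub transport_sym).
by rewrite (between_restr wf1 f_fe fsym) connect_transport_lab iso_between_lab.
Qed.

Lemma kept_transport v : E1 v -> kept M2 (phi v) = kept M1 v.
Proof.
move=> ev; apply: eq_existsb => x; apply: eq_existsb => y.
exact: between_transport_lab.
Qed.

Lemma median_transport v : E1 v -> is_median M2 (phi v) = is_median M1 v.
Proof.
move=> ev; apply: eq_existsb => a; apply: eq_existsb => b; apply: eq_existsb => c.
by rewrite /= !between_transport_lab.
Qed.

Lemma kept_connect_lab v : E1 v -> kept M1 v ->
  exists x, connect f (lab1 x) v /\ connect transport (lab2 x) (phi v).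
Proof.
move=> ev /existsP[x /existsP[y b]]; exists x; split.
  exact: (@between_connect_l _ _ _ (lab1 y)).
by apply: (@between_connect_l _ _ _ (lab2 y)); rewrite between_transport_lab.
Qed.

Lemma connect_transportE u w : E1 u -> E1 w -> kept M1 u -> kept M1 w ->
  connect transport (phi u) (phi w) = connect f u w.
Proof.
move=> eu ew ku kw.
have [x [cx1 cx2]] := kept_connect_lab eu ku.
have [y [cy1 cy2]] := kept_connect_lab ew kw.
rewrite (connect_sym_ends transport_sym cx2 cy2) (connect_sym_ends fsym cx1 cy1).
exact: connect_transport_lab.
Qed.

Lemma croot_transport v : E1 v -> is_croot r M2 (phi v) = is_croot r M1 v.
Proof.
move=> ev; rewrite /is_croot; case Er: r => [rho|//].
rewrite kept_transport //; case kv: (kept M1 v) => //=.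
apply: eq_forallb => z.
rewrite -phi_lab connect_transportE ?essential_lab //; last first.
  by apply/existsP; exists z; apply/existsP; exists z; rewrite /between connect0 eqxx.
case cz: (connect f v (lab1 z)) => //=.
by rewrite phi_lab; apply: iso_between_ltr => //; exact: connect_subrel f_fe cz.
Qed.

Lemma essential_transport v : E1 v -> essential r M2 (phi v) = essential r M1 v.
Proof.
move=> ev; rewrite /essential kept_transport // croot_transport // median_transport //.
by rewrite [phi v \in _]iso_codom_lab.
Qed.

Lemma cadj_transport u w : essential r M1 u -> essential r M1 w ->
  cadj r M2 (phi u) (phi w) = cadj r M1 u w.
Proof.
move=> eu ew; have eu1 := essential_restr wf1 f_fe fsym eu.
have ew1 := essential_restr wf1 f_fe fsym ew.
have ku : kept M1 u by case/andP: eu.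
have kw : kept M1 w by case/andP: ew.
have btw t : E1 t -> between transport (phi u) (phi w) (phi t) = between f u w t.
  move=> et; rewrite (between_restr wf2 transport_sub transport_sym).
  by rewrite (between_restr wf1 f_fe fsym) connect_transportE // iso_between.
rewrite /cadj !essential_transport // iso_eq // connect_transportE //.
congr [&& _, _, _, _ & _]; apply/forallP/forallP => H t.
  apply/implyP => /and3P[b tu tw]; apply/negP => et.
  have et1 := essential_restr wf1 f_fe fsym et.
  by move: (H (phi t)); rewrite btw // !iso_eq // b tu tw /= essential_transport // et.
apply/implyP => /and3P[b tu tw]; apply/negP => et.
have [et1 Et] := psiK (essential_restr wf2 transport_sub transport_sym et).
rewrite -Et btw // !iso_eq // essential_transport // in b tu tw et.
by move: (H (psi t)); rewrite b tu tw et.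
Qed.

Lemma transport_iso : fc_iso r M1 M2.
Proof.
exists phi, psi; split.
- move=> v ev; have e1 := essential_restr wf1 f_fe fsym ev.
  by split; [rewrite essential_transport | exact: (phiK e1).2].
- move=> w ew; have [e1 pw] := psiK (essential_restr wf2 transport_sub transport_sym ew).
  by split => //; rewrite -essential_transport // pw.
- exact: phi_lab.
- exact: cadj_transport.
- by move=> v ev; exact: croot_transport (essential_restr wf1 f_fe fsym ev).
Qed.

End Transport.

Lemma fc_iso_trans (X : finType) (r : option X) (A B C : lgraph X) :
  fc_iso r A B -> fc_iso r B C -> fc_iso r A C.
Proof.
case=> [p1 [q1 [A1 A2 A3 A4 A5]]] [p2 [q2 [B1 B2 B3 B4 B5]]].
exists (p2 \o p1), (q1 \o q2); split.
- move=> v ev; have [e1 E1] := A1 v ev; have [e2 E2] := B1 _ e1.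
  by split => //=; rewrite E2 E1.
- move=> w ew; have [e1 E1] := B2 w ew; have [e2 E2] := A2 _ e1.
  by split => //=; rewrite E2 E1.
- by move=> x /=; rewrite A3 B3.
- by move=> u v eu ev /=; rewrite B4 ?A4 ?(A1 u eu).1 ?(A1 v ev).1.
- by move=> v ev /=; rewrite B5 ?A5 ?(A1 v ev).1.
Qed.

Lemma subforest_refl (X : finType) (r : option X) (F : lgraph X) :
  is_xforest F -> subforest r F F.
Proof.
case: F => V tr fe lab xF; exists fe; split => //; first by case: xF => _ [_ [_ ? _]].
by exists id, id; split.
Qed.

Lemma subforest_trans (X : finType) (r : option X) (A B C : lgraph X) :
  is_xforest B -> is_xforest C -> subforest r A B -> subforest r B C -> subforest r A C.
Proof.
move=> xB xC [f [f_fe fsym isoAB]] [g [g_fe gsym [phi [psi [phiK psiK phi_lab phi_cadj phi_croot]]]]].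
have wfB := xforest_wf xB; have wfC := wf_restr (xforest_wf xC) g_fe gsym.
have trB : forall u v, connect (ltr B) u v by case: xB => [[_ _ ? _] _].
have isoBC := transport_iso wfB wfC trB phiK psiK phi_lab phi_cadj phi_croot f_fe fsym.
exists (transport (L2 := restr C g) f); split; last exact: fc_iso_trans isoAB isoBC.
  by move=> u v /transport_sub; exact: g_fe.
exact: (transport_sym wfC).
Qed.

Lemma classic_ex_minn (P : nat -> Prop) :
  (exists n, P n) -> exists2 n, P n & forall m, P m -> n <= m.
Proof.
case=> n Pn; apply: NNPP => nomin; elim/ltn_ind: n Pn => n IH Pn.
apply: nomin; exists n => // m Pm; rewrite leqNgt; apply/negP => /IH; exact.
Qed.

Unset Implicit Arguments.

Theorem lemma4p2 (X : finType) (r : option X) (F1 F2 : lgraph X)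
    (Fs : seq (lgraph X)) (F : lgraph X) :
  is_xforest F1 -> is_xforest F2 -> all_lg is_xforest Fs ->
  maximum_af r [:: F1, F2 & Fs] F ->
  exists F' : lgraph X, maximal_af r F1 F2 F' /\ maximum_af r (F' :: Fs) F.
Proof.
move=> xF1 xF2 _ [[xF [sF1 [sF2 sFs]]] minF].
pose ord_above_F n := exists G, [/\ agreement r [:: F1; F2] G, subforest r F G & lord G = n].
have [_ [G [[xG [sG1 [sG2 _]]] sFG <-]] minG] :
    exists2 n, ord_above_F n & forall m, ord_above_F m -> n <= m.
  apply: classic_ex_minn; exists (lord F), F.
  by split => //; exact: subforest_refl.
exists G; split.
  split=> // -[G' [[xG' [sG'1 [sG'2 _]]] sGG' ltG'G]].
  suff: lord G <= lord G' by rewrite leqNgt ltG'G.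
  by apply: minG; exists G'; split => //; exact: subforest_trans xG xG' sFG sGG'.
split=> // H [xH [sHG sHs]]; apply: minF.
split; [|split; [|split]] => //; first exact: subforest_trans xG xF1 sHG sG1.
exact: subforest_trans xG xF2 sHG sG2.
Qed.
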